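(* The lexicographically least infinite binary overlap-free word is $001001\,\overline{\mathbf{t}}$.
   Context: An overlap is a word $axaxa$ with $a$ a letter and $x$ a (possibly empty) word; a word is overlap-free if it contains no overlap as a factor. $\mu$ is the morphism $0\mapsto01$, $1\mapsto10$ on $\{0,1\}$, and $\overline{\mathbf{t}}=\mu^\omega(1)=1001011001101001\cdots$ is the fixed point of $\mu$ beginning with $1$. Infinite binary words are ordered lexicographically with $0<1$. *)

From mathcomp Require Import all_boot.
Set Implicit Arguments. Unset Strict Implicit. Unset Printing Implicit Defensive.

(* Binary alphabet {0,1} encoded as bool: 0 = false, 1 = true.
   Infinite binary words are functions nat -> bool. *)
Definition infword := nat -> bool.

Definition is_overlap (u : seq bool) : Prop :=
  exists (a : bool) (x : seq bool), u = [:: a] ++ x ++ [:: a] ++ x ++ [:: a].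

Definition factor_of (u : seq bool) (w : infword) : Prop :=
  exists i : nat, u = mkseq (fun k => w (i + k)) (size u).

Definition overlap_free (w : infword) : Prop :=
  forall u : seq bool, factor_of u w -> ~ is_overlap u.

Definition mu (s : seq bool) : seq bool := flatten (map (fun b => [:: b; ~~ b]) s).

(* tbar = mu^omega(1): its n-th letter is the n-th letter of mu^(n+1)(1),
   a word of length 2^(n+1) > n which is a prefix of tbar. *)
Definition tbar : infword := fun n => nth false (iter n.+1 mu [:: true]) n.

Definition prepend (p : seq bool) (w : infword) : infword :=
  fun n => if n < size p then nth false p n else w (n - size p).

Definition lex_lt (u v : infword) : Prop :=
  exists n : nat, (forall k, k < n -> u k = v k) /\ u n = false /\ v n = true.
Definition lex_le (u v : infword) : Prop := (forall n, u n = v n) \/ lex_lt u v.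

From mathcomp Require Import all_boot zify.
From Stdlib Require Import Classical.
Set Implicit Arguments. Unset Strict Implicit. Unset Printing Implicit Defensive.

(* The word 001001.tbar lies in a finite family of words l.tbar ([desubst_family]), each of
   which is, from some position s on, the mu-image of another member.  In a mu-image an overlap
   of odd period is impossible, and one of even period 2q starting at s-1 or later
   desubstitutes to an overlap of period q in a member of the family; induction on the period
   shows that the whole family is overlap-free.

   For minimality, let y be overlap-free and first differ from 001001.tbar by a 0 against a 1.
   In an overlap-free word the squares aa of letters (away from the first position) all start at
   positions of the same parity, so once y contains such a square it is a mu-image from any
   position of the other parity.  Desubstituting y and 001001.tbar together three times gives
   an overlap-free word starting with 1 and lexicographically below tbar, which is impossible
   since tbar = mu(tbar) is the least such word by the same argument.  First differences before
   position 18 are excluded by a finite search. *)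

Lemma mkseqD (T : Type) (f : nat -> T) m n :
  mkseq f (m + n) = mkseq f m ++ mkseq (fun k => f (m + k)) n.
Proof. by rewrite /mkseq iotaD map_cat -[0 + m]addnC iotaDl -map_comp. Qed.

Lemma mu_cat s1 s2 : mu (s1 ++ s2) = mu s1 ++ mu s2.
Proof. by rewrite /mu map_cat flatten_cat. Qed.

Lemma size_mu s : size (mu s) = (size s).*2.
Proof. by elim: s => [|b s IH] //=; rewrite IH. Qed.

Lemma nth_mu s k : k < size s ->
  nth false (mu s) k.*2 = nth false s k /\ nth false (mu s) k.*2.+1 = ~~ nth false s k.
Proof. by elim: s k => [|b s IH] [|k] //= /IH. Qed.

Lemma size_iter_mu j s : size (iter j mu s) = size s * 2 ^ j.
Proof. by elim: j => [|j IH]; rewrite ?muln1 // iterS size_mu IH expnS; lia. Qed.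

Lemma iter_mu_prefix j : exists t, iter j.+1 mu [:: true] = iter j mu [:: true] ++ t.
Proof.
elim: j => [|j [t Ht]]; first by exists [:: false].
by exists (mu t); rewrite [LHS]iterS {1}Ht mu_cat.
Qed.

Lemma nth_iter_mu_le j j' k : j <= j' -> k < 2 ^ j ->
  nth false (iter j' mu [:: true]) k = nth false (iter j mu [:: true]) k.
Proof.
move=> + Hk; elim: j' => [|j' IH]; first by rewrite leqn0 => /eqP->.
rewrite leq_eqVlt ltnS => /predU1P [<- //|Hj]; rewrite -IH //.
have [t ->] := iter_mu_prefix j'.
by rewrite nth_cat size_iter_mu mul1n (leq_trans Hk) // leq_exp2l.
Qed.

Lemma ltn_exp2S k : k < 2 ^ k.+1.
Proof. by rewrite (leq_trans (ltn_expl k (ltnSn 1))) // leq_exp2l. Qed.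

Lemma tbar_iter_mu j k : k < 2 ^ j -> tbar k = nth false (iter j mu [:: true]) k.
Proof.
have Hk := ltn_exp2S k.
move=> Hkj; rewrite /tbar -(@nth_iter_mu_le k.+1 (maxn j k.+1)) ?leq_maxr //.
by rewrite (@nth_iter_mu_le j) ?leq_maxl.
Qed.

(* [mu tbar = tbar], letter by letter *)
Lemma tbar_double k : tbar k.*2 = tbar k /\ tbar k.*2.+1 = ~~ tbar k.
Proof.
have Hk := ltn_exp2S k.
have H2 : k.*2.+1 < 2 ^ k.+2 by rewrite expnS mul2n ltn_Sdouble.
have := @nth_mu (iter k.+1 mu [:: true]) k; rewrite size_iter_mu mul1n => /(_ Hk) [E1 E2].
by rewrite (tbar_iter_mu (ltnW H2)) (tbar_iter_mu H2) (tbar_iter_mu Hk) [iter k.+2 _ _]iterS E1 E2.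
Qed.

Definition overlap_at (w : infword) i p :=
  0 < p /\ forall t, t <= p -> w (i + t) = w (i + t + p).

Lemma overlap_at_of_factor w u : factor_of u w -> is_overlap u -> exists i p, overlap_at w i p.
Proof.
move=> [i Hu] [a [x Hx]]; set p := (size x).+1.
exists i, p; split=> // t Htp.
have Hw k : k < size u -> nth false u k = w (i + k) by move=> Hk; rewrite Hu nth_mkseq.
have Hsize : size u = p.*2.+1 by rewrite Hx /p !size_cat /=; lia.
have Htake : take p.+1 u = a :: x ++ [:: a].
  have -> : u = (a :: x ++ [:: a]) ++ x ++ [:: a] by rewrite Hx /= -catA.
  by rewrite take_size_cat //= size_cat addn1.
have Hdrop : drop p u = a :: x ++ [:: a] by rewrite Hx catA drop_size_cat.
rewrite -addnA -!Hw ?Hsize; try lia.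
by rewrite -(nth_take false (_ : t < p.+1)) // Htake addnC -nth_drop Hdrop.
Qed.

Lemma overlap_at_factor w i p : overlap_at w i p ->
  let u := mkseq (fun k => w (i + k)) p.*2.+1 in factor_of u w /\ is_overlap u.
Proof.
case: p => [[]//|p] [_ Hper] u; split; first by exists i; rewrite size_mkseq.
set f := fun k => w (i + k).
have Hshift : mkseq (fun k => f (p.+1 + k)) p.+1 = mkseq f p.+1.
  apply/eq_in_map => k; rewrite mem_iota => /andP[_ Hk].
  by rewrite /f [in RHS]Hper; [congr w|]; lia.
have Hlast : f (p.+1 + p.+1) = f 0.
  by rewrite /f [in RHS](Hper 0) // addn0 (Hper p.+1) //; congr w; lia.
have Hhead : mkseq f p.+1 = f 0 :: mkseq (fun k => f k.+1) p by rewrite -add1n mkseqD.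
exists (f 0), (mkseq (fun k => f k.+1) p).
rewrite /u -addnn -addn1 !mkseqD Hshift Hhead.
have -> : mkseq (fun k => f (p.+1 + p.+1 + k)) 1 = [:: f 0] by rewrite /mkseq /= addn0 Hlast.
by rewrite -catA.
Qed.

Lemma overlap_freeP w : overlap_free w <-> forall i p, ~ overlap_at w i p.
Proof.
split=> [Hw i p /overlap_at_factor [Hf Ho] | Hw u Hf Ho]; first exact: Hw Hf Ho.
by have [i [p]] := overlap_at_of_factor Hf Ho; apply: Hw.
Qed.

Lemma eq_overlap_at z z' i p : z =1 z' -> overlap_at z i p -> overlap_at z' i p.
Proof. by move=> Ez [Hp Hper]; split=> // t Ht; rewrite -!Ez Hper. Qed.

Definition mu_image_from (z : infword) s (y : infword) :=
  forall k, z (s + k.*2) = y k /\ z (s + k.*2).+1 = ~~ y k.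

Lemma mu_image_fromE z s y : mu_image_from z s y ->
  forall n, s <= n -> z n = y (n - s)./2 (+) odd (n - s).
Proof.
move=> Hz n Hsn; have [E0 E1] := Hz (n - s)./2.
case Ho: (odd (n - s)).
  by rewrite addbT -E1; congr z; lia.
by rewrite addbF -E0; congr z; lia.
Qed.

Lemma mu_image_from_alternates z s y u :
  mu_image_from z s y -> s <= u -> ~~ odd (u - s) -> z u.+1 = ~~ z u.
Proof.
move=> Hz Hsu Hev; rewrite !(mu_image_fromE Hz) ?(leqW Hsu) //.
have -> : (u.+1 - s)./2 = (u - s)./2 by lia.
have -> : odd (u.+1 - s) = true by lia.
by rewrite (negbTE Hev) addbT addbF.
Qed.

Lemma alternating_run (z : infword) a n :
  (forall t, t < n -> z (a + t).+1 = ~~ z (a + t)) -> z (a + n) = z a (+) odd n.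
Proof.
elim: n => [|n IH] Halt; first by rewrite addn0 addbF.
by rewrite addnS Halt // IH => [|t Ht]; [rewrite addbN | apply: Halt; lia].
Qed.

Lemma mu_image_no_odd_overlap z s y i p :
  mu_image_from z s y -> s <= i.+1 -> odd p -> ~ overlap_at z i p.
Proof.
move=> Hz Hs Hp [Hp0 Hper].
have Halt t : t < p -> z (i + p + t).+1 = ~~ z (i + p + t).
  move=> Htp; have [Hodd|Hev] := boolP (odd (i + p + t - s)); last first.
    by apply: (mu_image_from_alternates Hz) => //; lia.
  (* one period earlier, the same two letters sit at an even offset from [s] *)
  have Hs' : s <= i + t by lia.
  have Hev : ~~ odd (i + t - s) by lia.
  have -> : (i + p + t).+1 = i + t.+1 + p by lia.
  have -> : i + p + t = i + t + p by lia.
  rewrite -(Hper t.+1 Htp) -(Hper t (ltnW Htp)) addnS.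
  exact: mu_image_from_alternates Hz Hs' Hev.
have := alternating_run Halt; rewrite -Hper // Hp addbT.
by case: (z _).
Qed.

Lemma overlap_at_halve (z c : infword) a b i q :
  (forall k, z (a + k.*2) = c k (+) b) -> overlap_at z (a + i.*2) q.*2 -> overlap_at c i q.
Proof.
move=> Hzc [Hq Hper]; split=> [|t Htq]; first lia.
apply: (@addIb b); rewrite -!Hzc.
have := Hper t.*2; rewrite leq_double => /(_ Htq) Hpt.
by rewrite (_ : a + (i + t).*2 = a + i.*2 + t.*2) ?Hpt; [congr z|]; lia.
Qed.

Lemma mu_image_overlap_desubst z s y i p : mu_image_from z s y -> s <= i ->
  overlap_at z i p -> exists2 q, q < p & overlap_at y (i - s)./2 q.
Proof.
move=> Hz Hsi Hov; have Hp0 := Hov.1.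
have [Hp|Hp] := boolP (odd p).
  by case: (mu_image_no_odd_overlap Hz (leqW Hsi) Hp Hov).
exists p./2; first lia.
apply: (@overlap_at_halve z y (s + odd (i - s)) (odd (i - s))).
  move=> k; rewrite (mu_image_fromE Hz); last lia.
  have -> : (s + odd (i - s) + k.*2 - s)./2 = k by lia.
  by have -> : odd (s + odd (i - s) + k.*2 - s) = odd (i - s) by lia.
have -> : s + odd (i - s) + ((i - s)./2).*2 = i by lia.
by have -> : (p./2).*2 = p by lia.
Qed.

Lemma mu_image_overlap_desubst_pred z s y p : mu_image_from z s y -> 0 < s ->
  overlap_at z s.-1 p -> exists2 q, q < p & overlap_at (prepend [:: ~~ z s.-1] y) 0 q.
Proof.
move=> Hz Hs Hov; have Hp0 := Hov.1.
have [Hp|Hp] := boolP (odd p).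
  by case: (mu_image_no_odd_overlap Hz (leqSpred s) Hp Hov).
exists p./2; first lia.
apply: (@overlap_at_halve z _ s.-1 true).
  move=> [|k]; first by rewrite addn0 /prepend /= addbT negbK.
  rewrite /prepend /= subn1 addbT -(proj2 (Hz k)).
  by have -> : s.-1 + k.+1.*2 = (s + k.*2).+1 by lia.
have -> : (p./2).*2 = p by lia.
by rewrite addn0.
Qed.

Lemma no_overlap_of_mu_image z s y c p i :
  mu_image_from z s y -> prepend [:: ~~ z s.-1] y =1 c ->
  (forall q, q < p -> forall j, ~ overlap_at y j q) ->
  (0 < s -> forall q, q < p -> ~ overlap_at c 0 q) ->
  s.-1 <= i -> ~ overlap_at z i p.
Proof.
move=> Hz Hc Hy Hcq Hi Hov; have [Hsi|Hsi] := ltnP i s.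
  have Hs : 0 < s by lia.
  have Ei : i = s.-1 by lia.
  rewrite Ei in Hov; have [q Hq /(eq_overlap_at Hc)] := mu_image_overlap_desubst_pred Hz Hs Hov.
  exact: Hcq.
by have [q Hq] := mu_image_overlap_desubst Hz Hsi Hov; apply: Hy.
Qed.

Lemma prepend0 w : prepend [::] w =1 w.
Proof. by move=> n; rewrite /prepend subn0. Qed.

Lemma prepend_cons b l w : prepend [:: b] (prepend l w) =1 prepend (b :: l) w.
Proof. by case=> [|n] //=; rewrite /prepend /= subn1 ltnS. Qed.

Lemma mu_image_from_prepend l s l' : s <= size l -> drop s l = mu l' ->
  mu_image_from (prepend l tbar) s (prepend l' tbar).
Proof.
move=> Hs Hl k.
have Hsize : size l = s + (size l').*2 by rewrite -(subnKC Hs) -size_drop Hl size_mu.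
rewrite /prepend; have [Hk|Hk] := ltnP k (size l').
  rewrite !ifT; try lia.
  by rewrite -addnS -!nth_drop Hl; apply: nth_mu.
rewrite !ifF; try lia.
have -> : (s + k.*2).+1 - size l = (k - size l').*2.+1 by lia.
have -> : s + k.*2 - size l = (k - size l').*2 by lia.
exact: tbar_double.
Qed.

Definition w001001 : infword := prepend [:: false; false; true; false; false; true] tbar.

Lemma mu_image_from_w001001 : mu_image_from w001001 2 (prepend [:: true; false] tbar).
Proof. exact: mu_image_from_prepend. Qed.

Lemma w001001_no_overlap_at_start p : ~ overlap_at w001001 0 p.
Proof.
move=> [Hp Hper]; case: p Hp Hper => [|[|[|[|p]]]] // _ Hper.
- by move/(_ 1 isT): Hper.
- by move/(_ 0 isT): Hper.
- by move/(_ 3 isT): Hper.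
(* for the period p+4, the squares 00 at positions 0 and 3 recur at p+4 and p+7, and one of
   these two positions is at an even offset from 2, where w001001 alternates *)
have Hsquare k : ~~ odd k -> w001001 (2 + k) = w001001 (2 + k).+1 -> False.
  move=> Hev; rewrite (mu_image_from_alternates mu_image_from_w001001 (leq_addr k 2)) ?addKn //.
  by case: (w001001 _).
have E0 : w001001 p.+4 = w001001 0 := esym (Hper 0 isT).
have E1 : w001001 p.+4.+1 = w001001 1 := esym (Hper 1 isT).
have E3 : w001001 p.+4.+3 = w001001 3 := esym (Hper 3 isT).
have E4 : w001001 p.+4.+4 = w001001 4 := esym (Hper 4 isT).
have [Hodd|Hev] := boolP (odd p).
  by apply: (Hsquare p.+4.+1); rewrite /= ?negbK ?E3 ?E4.
by apply: (Hsquare p.+2); rewrite /= ?negbK ?E0 ?E1.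
Qed.

(* Each member is, from some position, the [mu]-image of a member, and the letter just before
   that position followed by that member is again a member. *)
Definition desubst_family : seq (seq bool) :=
  [:: [:: false; false; true; false; false; true]; [:: true; false]; [:: true; true; false];
      [:: true]; [:: false; true]; [:: false]; [::]].

Lemma desubst_family_no_overlap p :
  forall l, l \in desubst_family -> forall i, ~ overlap_at (prepend l tbar) i p.
Proof.
elim/ltn_ind: p => p IH.
have step l s l' : s <= size l -> drop s l = mu l' -> l' \in desubst_family ->
    (~~ prepend l tbar s.-1 :: l') \in desubst_family ->
    forall i, s.-1 <= i -> ~ overlap_at (prepend l tbar) i p.
  move=> Hs Hl' Hmem Hmem' i; apply: (no_overlap_of_mu_image (mu_image_from_prepend Hs Hl')).
  - exact: prepend_cons.
  - by move=> q Hq j; apply: IH.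
  - by move=> _ q Hq; apply: IH.
move=> l + i; rewrite !inE.
case/orP=> [/eqP->|].
  by case: i => [|i]; [apply: w001001_no_overlap_at_start | apply: (step _ 2 [:: true; false])].
case/orP=> [/eqP->|]; first by apply: (step _ 0 [:: true]).
case/orP=> [/eqP->|]; first by apply: (step _ 1 [:: true]).
case/orP=> [/eqP->|]; first by apply: (step _ 1 [::]).
case/orP=> [/eqP->|]; first by apply: (step _ 0 [:: false]).
case/orP=> [/eqP->|]; first by apply: (step _ 1 [::]).
by move/eqP->; apply: (step _ 0 [::]).
Qed.

Lemma w001001_overlap_free : overlap_free w001001.
Proof. by apply/overlap_freeP => i p; apply: (@desubst_family_no_overlap p). Qed.

Definition lex_lt_at (y T : infword) n :=
  (forall k, k < n -> y k = T k) /\ y n = false /\ T n = true.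

Lemma lex_lt_at_desubst y T y' T' s n : mu_image_from y s y' -> mu_image_from T s T' ->
  lex_lt_at y T n -> s <= n -> exists2 k, n = s + k.*2 & lex_lt_at y' T' k.
Proof.
move=> Hy HT [Hagree [Hyn HTn]] Hsn; set h := (n - s)./2.
have [Ho|He] := boolP (odd (n - s)).
  have Hprev : y' h = T' h.
    by rewrite -(proj1 (Hy h)) -(proj1 (HT h)); apply: Hagree; lia.
  move: Hyn HTn; rewrite (mu_image_fromE Hy) ?(mu_image_fromE HT) // -/h Ho Hprev.
  by move=> ->.
have En : s + h.*2 = n by lia.
exists h; first by [].
split=> [k Hk|]; first by rewrite -(proj1 (Hy k)) -(proj1 (HT k)); apply: Hagree; lia.
by rewrite -(proj1 (Hy h)) -(proj1 (HT h)) En.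
Qed.

Lemma overlap_free_desubst z s y : mu_image_from z s y -> overlap_free z -> overlap_free y.
Proof.
move=> Hz /overlap_freeP Hfree; apply/overlap_freeP => i p [Hp Hper].
apply: (Hfree (s + i.*2) p.*2); split=> [|t Ht]; first lia.
rewrite !(mu_image_fromE Hz); try lia.
have -> : (s + i.*2 + t - s)./2 = i + t./2 by lia.
have -> : (s + i.*2 + t + p.*2 - s)./2 = i + t./2 + p by lia.
have -> : odd (s + i.*2 + t + p.*2 - s) = odd (s + i.*2 + t - s) by lia.
by rewrite Hper //; lia.
Qed.

Definition overlapb (s : seq bool) i p :=
  [&& 0 < p, i + p.*2 < size s &
      all (fun t => nth false s (i + t) == nth false s (i + t + p)) (iota 0 p.+1)].

Definition overlap_freeb (s : seq bool) :=
  ~~ has (fun i => has (overlapb s i) (iota 0 (size s))) (iota 0 (size s)).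

Lemma overlap_freeb_factor y j n : overlap_free y -> overlap_freeb (mkseq (fun k => y (j + k)) n).
Proof.
move/overlap_freeP=> Hy; apply/negP => /hasP [i _ /hasP [p _]].
rewrite /overlapb size_mkseq => /and3P [Hp Hsize /allP Hall].
apply: (Hy (j + i) p); split=> // t Ht.
have := Hall t; rewrite mem_iota ltnS Ht => /(_ isT) /eqP.
by rewrite !nth_mkseq ?addnA //; lia.
Qed.

Lemma next_letter_square y i : overlap_free y -> 0 < i -> y i = y i.+1 ->
  [/\ y i.+1 != y i.+2, y i.+3 != y i.+4 & (y i.+2 == y i.+3) || (y i.+4 == y i.+4.+1)].
Proof.
move=> Hy Hi; have := overlap_freeb_factor i.-1 7 Hy.
have Hw k : y (i.-1 + k.+1) = y (i + k) by congr y; lia.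
have E5 : i + 5 = i.+4.+1 by lia.
rewrite /mkseq /= !Hw !addn0 addn1 addn2 addn3 addn4 E5.
by case: (y i.-1); case: (y i); case: (y i.+1); case: (y i.+2); case: (y i.+3); case: (y i.+4);
  case: (y i.+4.+1); vm_compute.
Qed.

Lemma letter_squares_even_distance y i d : overlap_free y -> 0 < i ->
  y i = y i.+1 -> y (i + d) = y (i + d).+1 -> ~~ odd d.
Proof.
move=> Hy; elim/ltn_ind: d i => d IH i Hi Hsq Hsqd.
have [H12 H34 Hnext] := next_letter_square Hy Hi Hsq.
case: d IH Hsqd => [|[|[|[|[|d]]]]] IH Hsqd //.
- by rewrite addn1 in Hsqd; rewrite Hsqd eqxx in H12.
- by rewrite addn3 in Hsqd; rewrite Hsqd eqxx in H34.
(* a square at distance [d + 5] is reached from the next square, at distance 2 or 4 *)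
case/orP: Hnext => /eqP Hnext.
  have Hsq2 : y (i + 2) = y (i + 2).+1 by rewrite addn2.
  have Hsqd2 : y (i + 2 + d.+3) = y (i + 2 + d.+3).+1 by rewrite -addnA.
  have := IH d.+3 (leq_addl 1 d.+4) (i + 2) (ltn_addr _ Hi) Hsq2 Hsqd2.
  by rewrite /= !negbK.
have Hsq4 : y (i + 4) = y (i + 4).+1 by rewrite addn4.
have Hsqd4 : y (i + 4 + d.+1) = y (i + 4 + d.+1).+1 by rewrite -addnA.
have := IH d.+1 (leq_addl 3 d.+2) (i + 4) (ltn_addr _ Hi) Hsq4 Hsqd4.
by rewrite /= !negbK.
Qed.

Lemma mu_image_from_square y s q : overlap_free y -> 0 < q -> y q = y q.+1 ->
  odd s != odd q -> y s.+1 = ~~ y s -> mu_image_from y s (fun k => y (s + k.*2)).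
Proof.
move=> Hy Hq Hsq Hpar Hs [|k]; first by rewrite addn0.
split=> //; set u := s + k.+1.*2.
have [/eqP Hsqu|] := boolP (y u == y u.+1); last by case: (y u); case: (y u.+1).
have Hu : 0 < u by rewrite /u addnS.
have Hou : odd u = odd s by rewrite /u oddD odd_double addbF.
have [Hqu|Huq] := leqP q u.
  have := letter_squares_even_distance (d := u - q) Hy Hq Hsq; rewrite subnKC // => /(_ Hsqu).
  by rewrite oddB // Hou; move: Hpar; case: (odd s); case: (odd q).
have := letter_squares_even_distance (d := q - u) Hy Hu Hsqu; rewrite subnKC ?(ltnW Huq) //.
by move=> /(_ Hsq); rewrite oddB ?(ltnW Huq) // Hou; move: Hpar; case: (odd s); case: (odd q).
Qed.

Lemma lex_lt_at_desubst_square y T T' s q n :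
  overlap_free y -> mu_image_from T s T' -> lex_lt_at y T n ->
  s < q -> q.+1 < n -> T q = T q.+1 -> odd s != odd q -> T s.+1 = ~~ T s ->
  exists2 m, n = s + m.*2 &
    overlap_free (fun k => y (s + k.*2)) /\ lex_lt_at (fun k => y (s + k.*2)) T' m.
Proof.
move=> Hy HT Hlt Hsq Hqn HTq Hpar HTs.
have Hyz : mu_image_from y s (fun k => y (s + k.*2)).
  by apply: (mu_image_from_square Hy (_ : 0 < q) _ Hpar); rewrite ?Hlt.1 //; lia.
have Hsn : s <= n by lia.
have [m Hm Hlt'] := lex_lt_at_desubst Hyz HT Hlt Hsn.
by exists m => //; split=> //; apply: overlap_free_desubst Hyz Hy.
Qed.

Lemma tbar_lex_min y n : overlap_free y -> 0 < n -> ~ lex_lt_at y tbar n.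
Proof.
elim/ltn_ind: n y => n IH y Hy Hn Hlt.
have [Hsmall|H3n] := ltnP n 3.
  by case: n {IH} Hn Hsmall Hlt => [|[|[|]]] // _ _ [_ []].
have HT : mu_image_from tbar 0 tbar by move=> k; apply: tbar_double.
have [k Hk [Hy' Hlt']] :=
  lex_lt_at_desubst_square (q := 1) Hy HT Hlt isT H3n erefl isT erefl.
by apply: (IH k _ _ Hy' _ Hlt'); lia.
Qed.

Fixpoint extendable (s : seq bool) d :=
  if d is d'.+1 then
    overlap_freeb s && (extendable (rcons s false) d' || extendable (rcons s true) d')
  else overlap_freeb s.

Lemma extendable_prefix w n d : overlap_free w -> extendable (mkseq w n) d.
Proof.
move=> Hw; elim: d n => [|d IH] n /=; first exact: overlap_freeb_factor 0 n Hw.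
rewrite (overlap_freeb_factor 0 n Hw) /=; have := IH n.+1; rewrite mkseqS.
by case: (w n) => ->; rewrite ?orbT.
Qed.

Definition w001001_prefix := [:: false; false; true; false; false; true] ++ iter 5 mu [:: true].

Lemma nth_w001001_prefix k : k < 38 -> w001001 k = nth false w001001_prefix k.
Proof.
move=> Hk; rewrite /w001001 /prepend /w001001_prefix nth_cat /=; case: ifP => // /negbT Hk6.
by rewrite (@tbar_iter_mu 5) //; lia.
Qed.

(* Below position 18, where the desubstitution in [w001001_lex_min] does not apply yet,
   replacing a 1 of [w001001] by 0 leaves no overlap-free continuation by two more letters. *)
Lemma w001001_short_check : all (fun n =>
    ~~ nth false w001001_prefix n || ~~ extendable (rcons (take n w001001_prefix) false) 2)
  (iota 0 18).
Proof. by vm_compute. Qed.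

Lemma w001001_lex_min_short y n : overlap_free y -> n < 18 -> ~ lex_lt_at y w001001 n.
Proof.
move=> Hy Hn [Hagree [Hyn Hwn]]; have Hsize : size w001001_prefix = 38 by [].
have := allP w001001_short_check n; rewrite mem_iota Hn -nth_w001001_prefix; last lia.
rewrite Hwn => /(_ isT) /negP; apply.
have -> : rcons (take n w001001_prefix) false = mkseq y n.+1.
  rewrite mkseqS Hyn; congr rcons; apply: (@eq_from_nth _ false) => [|k].
    by rewrite size_takel ?size_mkseq ?Hsize //; lia.
  rewrite size_takel => [Hk|]; last by rewrite Hsize; lia.
  by rewrite nth_take // nth_mkseq // Hagree // nth_w001001_prefix //; lia.
exact: extendable_prefix.
Qed.

Lemma w001001_lex_min y n : overlap_free y -> ~ lex_lt_at y w001001 n.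
Proof.
move=> Hy Hlt; have [Hn|Hn] := ltnP n 18; first exact: w001001_lex_min_short Hy Hn Hlt.
have H4 : 4 < n by lia.
have [n1 En1 [Hy1 Hlt1]] := lex_lt_at_desubst_square (q := 3) Hy
  mu_image_from_w001001 Hlt isT H4 erefl isT erefl.
have H4' : 4 < n1 by lia.
have M1 : mu_image_from (prepend [:: true; false] tbar) 0 (prepend [:: true] tbar).
  exact: mu_image_from_prepend.
have [n2 En2 [Hy2 Hlt2]] := lex_lt_at_desubst_square (q := 3) Hy1
  M1 Hlt1 isT H4' erefl isT erefl.
have H3 : 3 < n2 by lia.
have M2 : mu_image_from (prepend [:: true] tbar) 1 (prepend [::] tbar).
  exact: mu_image_from_prepend.
have [n3 En3 [Hy3 [Hagree3 [Hyn3 Htn3]]]] := lex_lt_at_desubst_square (q := 2) Hy2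
  M2 Hlt2 isT H3 erefl isT erefl.
apply: (tbar_lex_min Hy3 (_ : 0 < n3)); first lia.
split=> [k /Hagree3 ->|]; first exact: prepend0.
by split=> //; rewrite -prepend0.
Qed.

Lemma lex_le_of_not_lex_lt_at W w : (forall n, ~ lex_lt_at w W n) -> lex_le W w.
Proof.
move=> Hmin; have [Heq|Hne] := classic (forall n, W n = w n); [by left | right].
have [n /eqP Hn] := not_all_ex_not _ _ Hne.
have [m Hm Hfirst] := ex_minnP (ex_intro (fun n => W n != w n) n Hn).
have Hagree k : k < m -> W k = w k.
  by move=> Hk; apply/eqP; apply: contraTT Hk => /Hfirst; rewrite -leqNgt.
case HWm: (W m) Hm => Hm.
  by case: (Hmin m); split=> [k /Hagree ->|]; move: Hm; case: (w m).
by exists m; split=> //; move: Hm; case: (w m).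
Qed.

Theorem theorem5 :
  overlap_free (prepend [:: false; false; true; false; false; true] tbar) /\
  (forall w : infword, overlap_free w ->
     lex_le (prepend [:: false; false; true; false; false; true] tbar) w).
Proof.
split; first exact: w001001_overlap_free.
by move=> w Hw; apply: lex_le_of_not_lex_lt_at => n; apply: w001001_lex_min.
Qed.
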